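(* For every positive integer $n$, $N'(n,n-1,1)=n$.
   Context: $\mathbb{Z}_4$ is the ring of integers modulo $4$; a $\mathbb{Z}_4$-code of length $n$ is a $\mathbb{Z}_4$-submodule of $\mathbb{Z}_4^n$. Two codes are equivalent if one is obtained from the other by permuting coordinates and changing the signs of some coordinates. Every $\mathbb{Z}_4$-code is permutation-equivalent to one with generator matrix $\begin{pmatrix} I_{k_1} & A & B \\ O & 2I_{k_2} & 2D\end{pmatrix}$ with $A,D$ $(0,1)$-matrices and $B$ a $\mathbb{Z}_4$-matrix; the code then has type $4^{k_1}2^{k_2}$. The trivial extension of a code $C$ of length $n-1$ is $\{(c,0)\mid c\in C\}$ (the only code of length $0$ is the zero code). $N'(n,k_1,k_2)$ denotes the number of equivalence classes of $\mathbb{Z}_4$-codes of length $n$ and type $4^{k_1}2^{k_2}$ that are not equivalent to the trivial extension of any $\mathbb{Z}_4$-code of length $n-1$. *)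

From HB Require Import structures.
From mathcomp Require Import all_boot all_order fingroup perm all_algebra.
Set Implicit Arguments. Unset Strict Implicit. Unset Printing Implicit Defensive.
Import GRing.Theory.
Local Open Scope ring_scope.

Notation Z4 := 'Z_4.
Notation word n := 'rV[Z4]_n.

Definition is_code (n : nat) (C : {set word n}) : bool :=
  [&& (0 : word n) \in C,
      [forall x in C, forall y in C, x + y \in C] &
      [forall a : Z4, forall x in C, a *: x \in C]].

Definition perm_code (n : nat) (s : 'S_n) (C : {set word n}) : {set word n} :=
  [set (\row_j c 0 (s j)) | c : word _ in C].

Definition equiv_code (n : nat) (C D : {set word n}) : bool :=
  [exists s : 'S_n, exists e : {ffun 'I_n -> bool},
     D == [set (\row_j ((-1) ^+ e j * c 0 (s j))) | c : word _ in C]].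

(* M is a generator matrix in standard form
   ( I_{k1}  A      B   )
   ( O       2I_{k2} 2D )   with A, D (0,1)-matrices. *)
Definition std_form (k1 k2 n : nat) (M : 'M[Z4]_(k1 + k2, n)) : bool :=
  [forall i : 'I_(k1 + k2), forall j : 'I_n,
    if (i < k1)%N then
      (if (j < k1)%N then M i j == ((nat_of_ord i == nat_of_ord j) : nat)%:R
       else if (j < k1 + k2)%N then M i j \in [:: 0; 1]
       else true)
    else
      (if (j < k1)%N then M i j == 0
       else if (j < k1 + k2)%N then
         M i j == (2 * ((nat_of_ord i == nat_of_ord j) : nat))%:R
       else M i j \in [:: 0; 2%:R])].

Definition gen_code (m n : nat) (M : 'M[Z4]_(m, n)) : {set word n} :=
  [set (u *m M) | u : 'rV[Z4]_m].

(* C has type 4^{k1} 2^{k2}: C is permutation-equivalent to the code generated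
   by a matrix in standard form with parameters k1, k2 *)
Definition has_type (n k1 k2 : nat) (C : {set word n}) : bool :=
  (k1 + k2 <= n)%N &&
  [exists s : 'S_n, exists M : 'M[Z4]_(k1 + k2, n),
     std_form M && (perm_code s C == gen_code M)].

(* trivial extension of a code of length m to length n (intended: n = m+1):
   coordinates j < m are copied, the remaining (last) coordinate is 0 *)
Definition triv_ext (m n : nat) (C : {set word m}) : {set word n} :=
  [set (\row_(j < n) match @insub nat (fun k => (k < m)%N) 'I_m (nat_of_ord j) with
                     | Some k => c 0 k | None => 0 end) | c : word _ in C].

Definition nontriv_codes (n k1 k2 : nat) : {set {set word n}} :=
  [set C : {set word n} | [&& is_code C, has_type k1 k2 C &
     ~~ [exists D : {set word n.-1},
           is_code D && equiv_code C (triv_ext n D)]]].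

Definition Nprime (n k1 k2 : nat) : nat :=
  #|[set [set D in nontriv_codes n k1 k2 | equiv_code C D]
       | C in nontriv_codes n k1 k2]|.

From mathcomp Require Import all_boot all_order fingroup perm all_algebra.
Set Implicit Arguments. Unset Strict Implicit. Unset Printing Implicit Defensive.
Import GRing.Theory.
Local Open Scope ring_scope.

(* Up to a coordinate permutation, a code of type 4^(n-1) 2^1 is generated by
   [[I, a], [0, 2]] with a a (0,1)-column, so it is the set of words x with
   x_n - sum_i a_i x_i even, i.e. the code of all words whose coordinates in a
   nonempty set S have an even sum.  A signed permutation (s, e) maps the code
   of S to the code of s^-1(S), and S is recovered from its code as the set of
   unit vectors it misses; hence the classes of these codes are indexed by
   |S| in {1, ..., n}.  None of them is a trivial extension: each contains
   2 e_j for every j, so an equivalent code has a word with last entry -2 or 2. *)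

Ltac case_Z4 x := case: x => [[|[|[|[|?]]]] ?] //.

Lemma odd_Z4D (x y : Z4) : odd (x + y)%R = odd x (+) odd y.
Proof. by case_Z4 x; case_Z4 y. Qed.

Lemma odd_Z4M (x y : Z4) : odd (x * y)%R = odd x && odd y.
Proof. by case_Z4 x; case_Z4 y. Qed.

Lemma odd_Z4N (x : Z4) : odd (- x)%R = odd x.
Proof. by case_Z4 x. Qed.

Lemma odd_Z4_sign (b : bool) (x : Z4) : odd ((-1) ^+ b * x)%R = odd x.
Proof. by rewrite mulr_sign; case: b; rewrite ?odd_Z4N. Qed.

Lemma odd_Z4_sum (I : finType) (A : pred I) (F : I -> Z4) :
  odd (\sum_(i | A i) F i)%R = \big[addb/false]_(i | A i) odd (F i).
Proof. exact: (big_morph (fun x : Z4 => odd x) odd_Z4D). Qed.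

Lemma even_Z4E (x : Z4) : ~~ odd x -> x = ((x == 2%:R) : nat)%:R * 2%:R.
Proof. by case_Z4 x => _; apply/eqP. Qed.

Definition parity_code n (S : {set 'I_n}) : {set word n} :=
  [set x : word n | ~~ odd (\sum_(j in S) x 0 j)%R].

Lemma parity_code_is_code n (S : {set 'I_n}) : is_code (parity_code S).
Proof.
apply/and3P; split.
- by rewrite inE big1 // => j _; rewrite mxE.
- apply/forall_inP => x; rewrite inE => x_even; apply/forall_inP => y.
  rewrite !inE => y_even; under eq_bigr do rewrite mxE.
  by rewrite big_split odd_Z4D (negbTE x_even) (negbTE y_even).
- apply/forallP => a; apply/forall_inP => x; rewrite !inE => x_even.
  under eq_bigr do rewrite mxE.
  by rewrite -mulr_sumr odd_Z4M (negbTE x_even) andbF.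
Qed.

Lemma scale2_parity_code n (S : {set 'I_n}) (x : word n) :
  2%:R *: x \in parity_code S.
Proof. by rewrite inE; under eq_bigr do rewrite mxE; rewrite -mulr_sumr odd_Z4M. Qed.

Lemma delta_mx_parity_code n (S : {set 'I_n}) (i : 'I_n) :
  (delta_mx 0 i \in parity_code S) = (i \notin S).
Proof.
rewrite inE; have [iS | iNS] := boolP (i \in S).
  rewrite (bigD1 i) // big1 => [|j /andP[_ /negbTE ji]]; last by rewrite mxE ji.
  by rewrite mxE !eqxx.
rewrite big1 // => j jS; rewrite mxE (_ : j == i = false) //.
by apply: contraNF iNS => /eqP <-.
Qed.

Definition code_support n (C : {set word n}) : {set 'I_n} :=
  [set i | delta_mx 0 i \notin C].

Lemma parity_codeK n : cancel (@parity_code n) (@code_support n).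
Proof. by move=> S; apply/setP => i; rewrite inE delta_mx_parity_code negbK. Qed.

Definition signed_perm n (s : 'S_n) (e : {ffun 'I_n -> bool}) (c : word n) :
  word n := \row_j ((-1) ^+ e j * c 0 (s j)).

Lemma signed_permK n (s : 'S_n) (e : {ffun 'I_n -> bool}) :
  cancel (signed_perm s e) (signed_perm s^-1 [ffun j => e (s^-1 j)])%g.
Proof. by move=> c; apply/rowP => j; rewrite !mxE ffunE permKV signrMK. Qed.

Lemma equiv_codeP n (C D : {set word n}) :
  reflect (exists s e, D = signed_perm s e @: C) (equiv_code C D).
Proof.
apply: (iffP existsP) => [[s /existsP[e /eqP ->]] | [s [e ->]]].
  by exists s, e.
by exists s; apply/existsP; exists e.
Qed.

Lemma perm_code_signed n (s : 'S_n) (C : {set word n}) :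
  perm_code s C = signed_perm s [ffun => false] @: C.
Proof. by apply: eq_imset => c; apply/rowP => j; rewrite !mxE ffunE mul1r. Qed.

Lemma preim_signed_perm_parity_code n (s : 'S_n) e (S : {set 'I_n}) :
  signed_perm s e @^-1: parity_code S = parity_code (s @: S).
Proof.
apply/setP => c; rewrite !inE big_imset /=; last by move=> i j _ _ /perm_inj.
by rewrite !odd_Z4_sum; under eq_bigr do rewrite mxE odd_Z4_sign.
Qed.

Lemma signed_perm_parity_code n (s : 'S_n) e (S : {set 'I_n}) :
  signed_perm s e @: parity_code S = parity_code (s @^-1: S).
Proof.
rewrite (can_imset_pre _ (signed_permK s e)).
by rewrite preim_signed_perm_parity_code im_permV.
Qed.

Lemma perm_imset_card_eq (T : finType) (A B : {set T}) :
  #|A| = #|B| -> exists s : {perm T}, s @: A = B.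
Proof.
move=> cardAB.
pose sA := enum A ++ enum (~: A); pose sB := enum B ++ enum (~: B).
have sA_full x : x \in sA by rewrite mem_cat !mem_enum in_setC orbN.
have sB_uniq : uniq sB.
  rewrite cat_uniq !enum_uniq andbT /=.
  by apply/hasPn => x; rewrite !mem_enum in_setC.
have size_sAB : size sA = size sB by rewrite !size_cat -!cardE !cardsC.
have index_lt x : (index x sA < size sB)%N by rewrite -size_sAB index_mem.
pose f x := nth x sB (index x sA).
have f_inj : injective f.
  move=> x y; rewrite /f (set_nth_default x y (index_lt y)).
  move/eqP; rewrite nth_uniq ?index_lt // => /eqP/(congr1 (nth x sA)).
  by rewrite !nth_index.
exists (perm f_inj); apply/eqP.
rewrite eqEcard card_imset ?cardAB ?leqnn ?andbT; last exact: perm_inj.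
apply/subsetP => _ /imsetP[x xA ->]; rewrite permE /f.
have x_index : (index x sA < size (enum B))%N.
  by rewrite index_cat mem_enum xA -cardE -cardAB cardE index_mem mem_enum.
by rewrite nth_cat x_index -mem_enum mem_nth.
Qed.

Lemma equiv_parity_code n (S T : {set 'I_n}) :
  equiv_code (parity_code S) (parity_code T) = (#|S| == #|T|).
Proof.
apply/equiv_codeP/eqP => [[s [e]] | /perm_imset_card_eq[s sST]].
  rewrite signed_perm_parity_code => /(can_inj (@parity_codeK n)) ->.
  by rewrite card_preimset //; apply: perm_inj.
exists (s^-1)%g, [ffun => false].
by rewrite signed_perm_parity_code preim_permV sST.
Qed.

Lemma triv_ext_last m (D : {set word m}) (c : word m.+1) :
  c \in triv_ext m.+1 D -> c 0 ord_max = 0.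
Proof. by case/imsetP => d _ ->; rewrite mxE insubN ?ltnn. Qed.

Lemma parity_code_not_triv_ext m (S : {set 'I_m.+1}) (D : {set word m}) :
  ~~ equiv_code (parity_code S) (triv_ext m.+1 D).
Proof.
apply/equiv_codeP => -[s [e PS_ext]].
pose c : word m.+1 := 2%:R *: delta_mx 0 (s ord_max).
have : signed_perm s e c \in triv_ext m.+1 D.
  by rewrite PS_ext imset_f ?scale2_parity_code.
by move/triv_ext_last/eqP; rewrite !mxE !eqxx mulr_sign; case: (e ord_max).
Qed.

Definition parity_form m (M : 'M[Z4]_m.+1) : bool :=
  [forall i, forall j,
     if j != ord_max then M i j == ((i == j) : nat)%:R
     else if i != ord_max then M i j \in [:: 0; 1] else M i j == 2%:R].

Lemma parity_formP m (M : 'M[Z4]_m.+1) :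
  reflect [/\ forall i j, j != ord_max -> M i j = ((i == j) : nat)%:R,
              forall i, i != ord_max -> M i ord_max \in [:: 0; 1]
            & M ord_max ord_max = 2%:R]
          (parity_form M).
Proof.
apply: (iffP forallP) => [M_form | [M_id M_last M_corner] i].
  split=> [i j jN | i iN |].
  - by move/forallP/(_ j): (M_form i); rewrite jN => /eqP.
  - by move/forallP/(_ ord_max): (M_form i); rewrite eqxx iN.
  - by move/forallP/(_ ord_max): (M_form ord_max); rewrite eqxx /= => /eqP.
apply/forallP => j; have [-> | jN] := eqVneq j ord_max; last by rewrite /= M_id.
by have [-> | iN] := eqVneq i ord_max; rewrite /= ?M_corner ?M_last.
Qed.

Lemma std_form_parity m (M : 'M[Z4]_(m + 1, m.+1)) :
  std_form M = parity_form (castmx (addn1 m, erefl m.+1) M).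
Proof.
have lt_m (j : 'I_m.+1) : (j < m)%N = (j != ord_max).
  by rewrite ltn_neqAle -ltnS ltn_ord andbT.
have reindex (F : 'I_(m + 1) -> bool) :
    [forall i, F i] = [forall i : 'I_m.+1, F (cast_ord (esym (addn1 m)) i)].
  apply/forallP/forallP => F_all i //.
  by have := F_all (cast_ord (addn1 m) i); rewrite cast_ordK.
rewrite /std_form; apply: (etrans (reindex _)).
apply: eq_forallb => i; apply: eq_forallb => j.
have j_lt : (j < m + 1)%N by rewrite addn1.
rewrite castmxE cast_ord_id /= !lt_m j_lt.
have [-> | jN] := eqVneq j ord_max; have [-> | iN] := eqVneq i ord_max => //=.
- by rewrite eqxx muln1.
- by rewrite [ord_max == _]eq_sym (negbTE jN).
Qed.

Lemma gen_code_castmx r r' n (e : r = r') (M : 'M[Z4]_(r, n)) :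
  gen_code (castmx (e, erefl n) M) = gen_code M.
Proof. by case: r' / e; rewrite castmx_id. Qed.

Definition gen_support m (M : 'M[Z4]_m.+1) : {set 'I_m.+1} :=
  [set j | (j == ord_max) || (M j ord_max == 1)].

Section ParityGenerator.

Variables (m : nat) (M : 'M[Z4]_m.+1).
Hypothesis M_id : forall i j, j != ord_max -> M i j = ((i == j) : nat)%:R.
Hypothesis M_last : forall i, i != ord_max -> M i ord_max \in [:: 0; 1].
Hypothesis M_corner : M ord_max ord_max = 2%:R.

Lemma mulmx_parity_col (u : 'rV[Z4]_m.+1) j :
  j != ord_max -> (u *m M) 0 j = u 0 j.
Proof.
move=> jN; rewrite mxE (bigD1 j) //= M_id // eqxx mulr1 big1 ?addr0 // => i ij.
by rewrite M_id // (negbTE ij) mulr0.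
Qed.

Lemma mulmx_parity_last (u : 'rV[Z4]_m.+1) :
  (u *m M) 0 ord_max =
    u 0 ord_max * 2%:R + \sum_(i | i != ord_max) u 0 i * M i ord_max.
Proof. by rewrite mxE (bigD1 ord_max) //= M_corner. Qed.

Lemma odd_sum_last_col (v : 'I_m.+1 -> Z4) :
  odd (\sum_(i | i != ord_max) v i * M i ord_max)%R =
  odd (\sum_(i in gen_support M | i != ord_max) v i)%R.
Proof.
rewrite !odd_Z4_sum big_mkcond [RHS]big_mkcond; apply: eq_bigr => i _.
rewrite inE; have [-> // | iN] := eqVneq i ord_max.
have := M_last iN; rewrite !inE odd_Z4M /= andbT.
by case/orP => /eqP ->; rewrite ?andbF ?andbT.
Qed.

Lemma gen_code_parity : gen_code M = parity_code (gen_support M).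
Proof.
have ord_max_S : ord_max \in gen_support M by rewrite inE eqxx.
apply/setP => x; apply/imsetP/idP => [[u _ ->] | x_even].
  rewrite inE (bigD1 ord_max) //= odd_Z4D mulmx_parity_last odd_Z4D odd_Z4M.
  rewrite andbF odd_sum_last_col.
  suff -> : \sum_(j in gen_support M | j != ord_max) (u *m M) 0 j =
            \sum_(j in gen_support M | j != ord_max) u 0 j by rewrite addbb.
  by apply: eq_bigr => j /andP[_ /mulmx_parity_col].
(* the last coefficient is half of the even defect y of the last coordinate *)
pose y := x 0 ord_max - \sum_(i | i != ord_max) x 0 i * M i ord_max.
have y_even : ~~ odd y.
  rewrite /y odd_Z4D odd_Z4N odd_sum_last_col.
  by move: x_even; rewrite inE (bigD1 ord_max) //= odd_Z4D.
exists (\row_i (if i == ord_max then ((y == 2%:R) : nat)%:R else x 0 i)) => //.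
apply/rowP => j; have [-> | jN] := eqVneq j ord_max; last first.
  by rewrite mulmx_parity_col // mxE (negbTE jN).
rewrite mulmx_parity_last !mxE eqxx -(even_Z4E y_even).
rewrite (eq_bigr (fun i => x 0 i * M i ord_max)) => [|i iN]; last first.
  by rewrite mxE (negbTE iN).
by rewrite /y subrK.
Qed.

End ParityGenerator.

Lemma gen_code_parity_form m (M : 'M[Z4]_m.+1) :
  parity_form M -> gen_code M = parity_code (gen_support M).
Proof. by case/parity_formP; apply: gen_code_parity. Qed.

Definition parity_matrix m (T : {set 'I_m.+1}) : 'M[Z4]_m.+1 :=
  \matrix_(i, j) if j != ord_max then ((i == j) : nat)%:R
                 else if i != ord_max then ((i \in T) : nat)%:R else 2%:R.

Lemma parity_matrix_form m (T : {set 'I_m.+1}) : parity_form (parity_matrix T).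
Proof.
apply/parity_formP; split=> [i j jN | i iN |]; rewrite mxE ?jN ?iN ?eqxx //=.
by case: (i \in T).
Qed.

Lemma gen_support_parity_matrix m (T : {set 'I_m.+1}) :
  ord_max \in T -> gen_support (parity_matrix T) = T.
Proof.
move=> max_T; apply/setP => j; rewrite inE mxE eqxx /=.
by have [-> // | jN] := eqVneq j ord_max; case: (j \in T).
Qed.

Lemma has_type_parity_code m (C : {set word m.+1}) :
  has_type m 1 C -> exists2 S : {set 'I_m.+1}, S != set0 & C = parity_code S.
Proof.
case/andP => _ /existsP[s /existsP[M /andP[]]].
rewrite std_form_parity => /gen_code_parity_form + /eqP sC.
rewrite gen_code_castmx -sC perm_code_signed => sC_parity.
exists (s @: gen_support (castmx (addn1 m, erefl m.+1) M)).
  by apply/set0Pn; exists (s ord_max); rewrite imset_f // inE eqxx.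
rewrite -(preim_signed_perm_parity_code _ [ffun => false]) -sC_parity.
apply/setP => c.
by rewrite inE mem_imset //; apply: can_inj (signed_permK s _).
Qed.

Lemma parity_code_has_type m (S : {set 'I_m.+1}) :
  S != set0 -> has_type m 1 (parity_code S).
Proof.
case/set0Pn => k kS; pose s := tperm k ord_max.
have max_T : ord_max \in s @^-1: S by rewrite inE tpermR.
apply/andP; split; first by rewrite addn1.
apply/existsP; exists s; apply/existsP.
exists (castmx (esym (addn1 m), erefl m.+1) (parity_matrix (s @^-1: S))).
rewrite std_form_parity castmxKV parity_matrix_form gen_code_castmx.
rewrite gen_code_parity_form ?parity_matrix_form // gen_support_parity_matrix //.
by rewrite perm_code_signed signed_perm_parity_code /=.
Qed.

Lemma nontriv_codes_parity m :
  nontriv_codes m.+1 m 1 = @parity_code _ @: [set S : {set 'I_m.+1} | S != set0].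
Proof.
apply/setP => C; rewrite inE; apply/and3P/imsetP.
  by case=> _ /has_type_parity_code[S S0 ->] _; exists S; rewrite ?inE.
case=> S; rewrite inE => S0 ->; split; first exact: parity_code_is_code.
  exact: parity_code_has_type.
apply/existsP => -[D /andP[_ equiv_ext]].
by have := parity_code_not_triv_ext S D; rewrite equiv_ext.
Qed.

Lemma card_kernel_classes (U V : finType) (X : {set U}) (r : rel U)
    (f : U -> V) :
  {in X &, forall x y, r x y = (f x == f y)} ->
  #|[set [set y in X | r x y] | x in X]| = #|f @: X|.
Proof.
move=> rE; pose cls v := [set y in X | f y == v].
have -> : [set [set y in X | r x y] | x in X] = cls @: (f @: X).
  rewrite -imset_comp; apply: eq_in_imset => x xX; apply/setP => y.
  by rewrite !inE /=; case yX: (y \in X); rewrite //= rE // eq_sym.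
rewrite card_in_imset // => _ _ /imsetP[x xX ->] /imsetP[y yX ->] /setP/(_ x).
by rewrite !inE xX eqxx => /esym/eqP.
Qed.

Lemma card_set_ord_lt n (S : {set 'I_n}) : (#|S| < n.+1)%N.
Proof. by rewrite ltnS -[X in (_ <= X)%N](card_ord n) max_card. Qed.

Definition ord_card n (S : {set 'I_n}) : 'I_n.+1 := Ordinal (card_set_ord_lt S).

Lemma exists_set_card (T : finType) k :
  (k <= #|T|)%N -> exists S : {set T}, #|S| = k.
Proof.
case/card_geqP => s [s_uniq <- _]; exists [set x in s].
by rewrite cardsE; apply/card_uniqP.
Qed.

Lemma ord_card_nonempty n :
  @ord_card n @: [set S : {set 'I_n} | S != set0] = [set~ ord0].
Proof.
apply/setP => k; rewrite !inE -val_eqE /= -lt0n; apply/imsetP/idP.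
  by case=> S; rewrite inE -card_gt0 => S0 ->.
move=> k_gt0; have [|S cardS] := @exists_set_card 'I_n k.
  by rewrite card_ord -ltnS.
by exists S; [rewrite inE -card_gt0 cardS | apply: val_inj].
Qed.

Theorem mainTheorem4 (n : nat) : (0 < n)%N -> Nprime n n.-1 1 = n.
Proof.
case: n => // m _.
rewrite /Nprime /= nontriv_codes_parity.
rewrite (card_kernel_classes (f := fun C => ord_card (code_support C))); last first.
  move=> _ _ /imsetP[S _ ->] /imsetP[T _ ->].
  by rewrite !parity_codeK equiv_parity_code.
rewrite -imset_comp (@eq_imset _ _ _ (@ord_card m.+1)) => [|S]; last first.
  by rewrite /= parity_codeK.
by rewrite ord_card_nonempty cardsC1 card_ord.
Qed.
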